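(* Let $R$ be a ring and $K\subseteq R$ a subring (containing $1$) which is a (not necessarily commutative) field, and suppose that the projective line $\mathbb{P}(R)$ is disconnected. Then the generalized chain geometry $\Sigma(K,R)$ admits an automorphism which is not induced by any semilinear bijection of $R^2$.
   Context: $R$ is an associative ring with unit element $1$; $\mathrm{GL}_2(R)$ is the group of invertible $2\times2$ matrices over $R$. A pair $(a,b)\in R^2$ is admissible if it is the first row of some matrix in $\mathrm{GL}_2(R)$. The projective line $\mathbb{P}(R)$ is the set of all cyclic submodules $R(a,b)$ of the left $R$-module $R^2$ with $(a,b)$ admissible; $\mathrm{GL}_2(R)$ acts on it by $R(a,b)\mapsto R((a,b)G)$. Two points $R(a,b)$, $R(c,d)$ are distant iff $\begin{pmatrix}a&b\\c&d\end{pmatrix}\in\mathrm{GL}_2(R)$; $\mathbb{P}(R)$ is disconnected if the graph on $\mathbb{P}(R)$ whose edges are the pairs of distant points has more than one connected component. For a subfield $K$ of $R$, the standard $K$-chain is $\{R(k,l):(k,l)\in K^2\setminus\{(0,0)\}\}\subseteq\mathbb{P}(R)$, and the $K$-chains are its images under $\mathrm{GL}_2(R)$; $\Sigma(K,R)$ is the incidence structure (point set $\mathbb{P}(R)$, blocks the $K$-chains), and an automorphism of it is a bijection of $\mathbb{P}(R)$ which maps the set of $K$-chains onto itself. A semilinear bijection of $R^2$ is a bijective additive map $f:R^2\to R^2$ for which there is a ring automorphism $\zeta$ of $R$ with $f(rv)=r^\zeta f(v)$ for all $r\in R$, $v\in R^2$; a bijection $\gamma$ of $\mathbb{P}(R)$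 is induced by $f$ if $p^\gamma=f(p)$ for all $p\in\mathbb{P}(R)$. *)

From HB Require Import structures.
From mathcomp Require Import all_boot all_order all_algebra.
From Stdlib Require Import Relations.
Set Implicit Arguments. Unset Strict Implicit. Unset Printing Implicit Defensive.
Import GRing.Theory.
Local Open Scope ring_scope.

(* R : an associative ring with 1 (pzRingType: 1 = 0 is not excluded). *)
(* Elements of R^2 are row vectors 'rV[R]_2; R acts on the left by *: .  *)

Definition GL2 (R : pzRingType) (G : 'M[R]_2) : Prop :=
  exists H : 'M[R]_2, G *m H = 1%:M /\ H *m G = 1%:M.

Definition admissible (R : pzRingType) (v : 'rV[R]_2) : Prop :=
  exists G : 'M[R]_2, GL2 G /\ row 0 G = v.

Definition cyc (R : pzRingType) (v : 'rV[R]_2) : 'rV[R]_2 -> Prop :=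
  fun w => exists r : R, w = r *: v.

Definition isPoint (R : pzRingType) (S : 'rV[R]_2 -> Prop) : Prop :=
  exists v, admissible v /\ S = cyc v.

Definition point (R : pzRingType) := {S : 'rV[R]_2 -> Prop | isPoint S}.

Definition imgS (R : pzRingType) (f : 'rV[R]_2 -> 'rV[R]_2)
  (S : 'rV[R]_2 -> Prop) : 'rV[R]_2 -> Prop :=
  fun w => exists u, S u /\ w = f u.

Definition distant (R : pzRingType) (p q : point R) : Prop :=
  exists v w : 'rV[R]_2, proj1_sig p = cyc v /\ proj1_sig q = cyc w /\
    GL2 (col_mx v w).

Definition disconnected (R : pzRingType) : Prop :=
  exists p q : point R, ~ clos_refl_trans (point R) (@distant R) p q.

Definition subfield (R : pzRingType) (K : R -> Prop) : Prop :=
  K 1 /\ (1 : R) <> 0 /\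
  (forall x y, K x -> K y -> K (x - y) /\ K (x * y)) /\
  (forall x, K x -> x <> 0 -> exists y, K y /\ x * y = 1 /\ y * x = 1).

Definition std_chain (R : pzRingType) (K : R -> Prop) (p : point R) : Prop :=
  exists v : 'rV[R]_2, K (v 0 0) /\ K (v 0 1) /\ v <> 0 /\ proj1_sig p = cyc v.

Definition is_chain (R : pzRingType) (K : R -> Prop) (C : point R -> Prop) : Prop :=
  exists G : 'M[R]_2, GL2 G /\
    forall p : point R, C p <->
      exists q : point R, std_chain K q /\
        proj1_sig p = imgS (fun u => u *m G) (proj1_sig q).

Definition img_pt (R : pzRingType) (g : point R -> point R) (C : point R -> Prop)
  : point R -> Prop := fun p => exists q, C q /\ p = g q.

Definition chain_aut (R : pzRingType) (K : R -> Prop) (g : point R -> point R) : Prop :=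
  bijective g /\
  (forall C, is_chain K C -> is_chain K (img_pt g C)) /\
  (forall D, is_chain K D ->
     exists C, is_chain K C /\ forall p, D p <-> img_pt g C p).

Definition semilinear_bij (R : pzRingType) (f : 'rV[R]_2 -> 'rV[R]_2) : Prop :=
  bijective f /\ (forall u v, f (u + v) = f u + f v) /\
  exists zeta : {rmorphism R -> R}, bijective zeta /\
    forall (r : R) (v : 'rV[R]_2), f (r *: v) = zeta r *: f v.

Definition induced_by (R : pzRingType) (f : 'rV[R]_2 -> 'rV[R]_2)
  (g : point R -> point R) : Prop :=
  forall p : point R, proj1_sig (g p) = imgS f (proj1_sig p).

From mathcomp Require Import all_boot all_order all_algebra.
From Stdlib Require Import Relations ClassicalEpsilon FunctionalExtensionality
  PropExtensionality ProofIrrelevance.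
Set Implicit Arguments. Unset Strict Implicit. Unset Printing Implicit Defensive.
Import GRing.Theory.
Local Open Scope ring_scope.

(* Let [conn] be the equivalence relation generated by distance on P(R); its
   classes are the connected components of P(R).
   1. Every K-chain lies inside one component: GL_2(R) acts on P(R) by
      automorphisms of the distance graph, and every point R(k,l) of the
      standard chain equals R(0,1) or is distant from it.
   2. If p0 = R(row 0 M) with M invertible, then G = M^-1 S M, where S swaps
      the two coordinates, is an involution of GL_2(R) mapping p0 to the point
      R(row 1 M), which is distant from p0.  An involution that preserves the
      K-chains and the component of p0 may be applied on that component only
      and by the identity elsewhere: the result is still an automorphism.
   3. A semilinear map fixing the points R(0,1) and R(1,c), c in R, is a left
      multiplication v |-> t v, hence fixes every point of P(R).
   4. If P(R) is disconnected, take p0 outside the component of R(0,1) and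
      apply G on the component of p0 only.  A semilinear map inducing this
      automorphism fixes R(0,1) and all R(1,c), so it fixes p0, whereas p0 is
      moved to R(row 1 M) and the two rows of M are left independent. *)

Section Matrix2.
Variable R : pzRingType.

Lemma ord2 (i : 'I_2) : i = 0 \/ i = 1.
Proof. by case: i => [[|[|n]]] Hi; [left; apply: val_inj|right; apply: val_inj|]. Qed.

Lemma mulmx2E m n (A : 'M[R]_(m, 2)) (B : 'M[R]_(2, n)) i j :
  (A *m B) i j = A i 0 * B 0 j + A i 1 * B 1 j.
Proof.
rewrite mxE !big_ord_recl big_ord0 addr0.
by congr (_ * _ + _ * _); congr (_ _ _); apply: val_inj.
Qed.

Lemma mx2_eq (A B : 'M[R]_2) :
  A 0 0 = B 0 0 -> A 0 1 = B 0 1 -> A 1 0 = B 1 0 -> A 1 1 = B 1 1 -> A = B.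
Proof.
move=> e00 e01 e10 e11; apply/matrixP => i j.
by case: (ord2 i) => ->; case: (ord2 j) => ->.
Qed.

Lemma rv2_eq (u w : 'rV[R]_2) : u 0 0 = w 0 0 -> u 0 1 = w 0 1 -> u = w.
Proof. by move=> e0 e1; apply/matrixP => i j; rewrite (ord1 i); case: (ord2 j) => ->. Qed.

Lemma col_mx2_0 (u w : 'rV[R]_2) j : (col_mx u w : 'M_2) 0 j = u 0 j.
Proof. by rewrite mxE; case: splitP => // k _; rewrite (ord1 k). Qed.

Lemma col_mx2_1 (u w : 'rV[R]_2) j : (col_mx u w : 'M_2) 1 j = w 0 j.
Proof. by rewrite mxE; case: splitP => // k; rewrite (ord1 k). Qed.

Definition rv (a b : R) : 'rV[R]_2 := \row_(j < 2) if (j : nat) == 0%N then a else b.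

Lemma rv_0 a b : rv a b 0 0 = a. Proof. by rewrite mxE. Qed.
Lemma rv_1 a b : rv a b 0 1 = b. Proof. by rewrite mxE. Qed.

Lemma id2_00 : (1%:M : 'M[R]_2) 0 0 = 1. Proof. by rewrite mxE. Qed.
Lemma id2_01 : (1%:M : 'M[R]_2) 0 1 = 0. Proof. by rewrite mxE. Qed.
Lemma id2_10 : (1%:M : 'M[R]_2) 1 0 = 0. Proof. by rewrite mxE. Qed.
Lemma id2_11 : (1%:M : 'M[R]_2) 1 1 = 1. Proof. by rewrite mxE. Qed.

Lemma row2E i (A : 'M[R]_2) j : row i A 0 j = A i j. Proof. by rewrite mxE. Qed.
Lemma scale2E (a : R) (u : 'rV[R]_2) j : (a *: u) 0 j = a * u 0 j.
Proof. by rewrite mxE. Qed.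
Lemma add2E (u w : 'rV[R]_2) j : (u + w) 0 j = u 0 j + w 0 j.
Proof. by rewrite mxE. Qed.

Definition swap2 : 'M[R]_2 := col_mx (rv 0 1) (rv 1 0).

End Matrix2.

Ltac mx2_simp := rewrite ?(row2E, add2E, scale2E, mulmx2E, col_mx2_0, col_mx2_1,
  rv_0, rv_1, id2_00, id2_01, id2_10, id2_11, mulr0, mul0r, mulr1, mul1r, addr0, add0r).

Section ProjectiveLine.
Variable R : pzRingType.
Implicit Types (A G M N : 'M[R]_2) (u v w : 'rV[R]_2) (p q x y : point R).

Lemma swap2K : swap2 R *m swap2 R = 1%:M.
Proof. by apply: mx2_eq; rewrite /swap2; mx2_simp. Qed.

Lemma set_ext (S T : 'rV[R]_2 -> Prop) : (forall w, S w <-> T w) -> S = T.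
Proof.
move=> ST; apply: functional_extensionality => w.
exact: propositional_extensionality.
Qed.

Lemma pt_ext p q : proj1_sig p = proj1_sig q -> p = q.
Proof. by case: p => S hS; case: q => T hT /= ST; subst T; rewrite (proof_irrelevance _ hS hT). Qed.

Lemma GL2_mul A G : GL2 A -> GL2 G -> GL2 (A *m G).
Proof.
move=> [A' [AA' A'A]] [G' [GG' G'G]]; exists (G' *m A'); split.
  by rewrite mulmxA -(mulmxA A) GG' mulmx1 AA'.
by rewrite mulmxA -(mulmxA G') A'A mulmx1 G'G.
Qed.

Lemma GL2_involution G : G *m G = 1%:M -> GL2 G.
Proof. by move=> GG; exists G. Qed.

(* In a nonzero ring the second row of an invertible matrix is not a left
   multiple of the first: otherwise the (1,1) entry of M M^-1 would vanish. *)
Lemma rows_independent M : GL2 M -> (1 : R) <> 0 -> ~ cyc (row 0 M) (row 1 M).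
Proof.
move=> [N [MN _]] n10 [r row10]; apply: n10.
have entry j : M 1 j = r * M 0 j by rewrite -row2E row10 scale2E row2E.
have := congr1 (fun A : 'M[R]_2 => A 1 1) MN; have := congr1 (fun A : 'M[R]_2 => A 0 1) MN.
by rewrite /= !mulmx2E id2_01 id2_11 !entry -!mulrA -!mulrDr => ->; rewrite mulr0.
Qed.

Lemma adm_mul v G : GL2 G -> admissible v -> admissible (v *m G).
Proof. by move=> hG [M [hM <-]]; exists (M *m G); rewrite row_mul; split => //; apply: GL2_mul. Qed.

Lemma imgS_cyc v G : imgS (fun u => u *m G) (cyc v) = cyc (v *m G).
Proof.
apply: set_ext => w; split.
  by move=> [u [[r ->] ->]]; exists r; rewrite scalemxAl.
by move=> [r ->]; exists (r *: v); split; [exists r|rewrite scalemxAl].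
Qed.

Lemma imgS_comp G A (S : 'rV[R]_2 -> Prop) :
  imgS (fun u => u *m G) (imgS (fun u => u *m A) S) = imgS (fun u => u *m (A *m G)) S.
Proof.
apply: set_ext => w; split.
  by move=> [u [[u' [Su' ->]] ->]]; exists u'; rewrite mulmxA.
by move=> [u [Su ->]]; exists (u *m A); split; [exists u|rewrite mulmxA].
Qed.

Lemma act_isPoint G (HG : GL2 G) p : isPoint (imgS (fun u => u *m G) (proj1_sig p)).
Proof.
case: p => S [v [hv Sv]] /=; exists (v *m G).
by rewrite Sv imgS_cyc; split => //; apply: adm_mul.
Qed.

Definition act G (HG : GL2 G) p : point R := exist _ _ (act_isPoint HG p).

Lemma act_val G (HG : GL2 G) p v : proj1_sig p = cyc v -> proj1_sig (act HG p) = cyc (v *m G).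
Proof. by move=> /= ->; rewrite imgS_cyc. Qed.

Lemma act_invol G (HG : GL2 G) : G *m G = 1%:M -> involutive (act HG).
Proof.
move=> GG p; apply: pt_ext; rewrite /= imgS_comp GG; apply: set_ext => w.
by split=> [[u [Su ->]]|Sw]; [rewrite mulmx1|exists w; rewrite mulmx1].
Qed.

Lemma distant_act G (HG : GL2 G) p q : distant p q -> distant (act HG p) (act HG q).
Proof.
move=> [v [w [hp [hq hvw]]]]; exists (v *m G), (w *m G).
rewrite (act_val HG hp) (act_val HG hq) -mul_col_mx.
by do 2 split => //; apply: GL2_mul.
Qed.

Lemma distant_sym p q : distant p q -> distant q p.
Proof.
move=> [v [w [hp [hq hvw]]]]; exists w, v; do 2 split => //.
have -> : col_mx w v = swap2 R *m col_mx v w by apply: mx2_eq; rewrite /swap2; mx2_simp.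
by apply: GL2_mul hvw; apply: GL2_involution swap2K.
Qed.

Definition conn : point R -> point R -> Prop := clos_refl_trans (point R) (@distant R).

Lemma conn_sym p q : conn p q -> conn q p.
Proof.
elim=> [x y /distant_sym|x|x y z _ yx _ zy]; [exact: rt_step|exact: rt_refl|].
exact: rt_trans zy yx.
Qed.

Lemma conn_act G (HG : GL2 G) p q : conn p q -> conn (act HG p) (act HG q).
Proof.
elim=> [x y /(distant_act HG)|x|x y z _ xy _ yz]; [exact: rt_step|exact: rt_refl|].
exact: rt_trans xy yz.
Qed.

Definition mkpt v (hv : admissible v) : point R :=
  exist _ (cyc v) (ex_intro _ v (conj hv erefl)).

Lemma adm_01 : admissible (rv (0 : R) 1).
Proof.
exists (swap2 R); split; first exact: GL2_involution swap2K.
by apply: rv2_eq; rewrite !row2E /swap2; mx2_simp.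
Qed.

Definition pt01 : point R := mkpt adm_01.

Lemma GL2_shear (c : R) : GL2 (col_mx (rv 1 c) (rv 0 1)).
Proof.
exists (col_mx (rv 1 (- c)) (rv 0 1)).
by split; apply: mx2_eq; mx2_simp; rewrite ?addrN ?addNr.
Qed.

Lemma adm_1c (c : R) : admissible (rv 1 c).
Proof. by exists (col_mx (rv 1 c) (rv 0 1)); split; [apply: GL2_shear|apply: rv2_eq; rewrite !row2E; mx2_simp]. Qed.

Definition pt1c (c : R) : point R := mkpt (adm_1c c).

Lemma conn_1c (c : R) : conn (pt1c c) pt01.
Proof. by apply: rt_step; exists (rv 1 c), (rv 0 1); do 2 split => //; apply: GL2_shear. Qed.

Lemma disconnected_far : disconnected R -> exists p0, ~ conn pt01 p0.
Proof.
move=> [p [q pq]].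
have [p01|] := classic (conn pt01 p); last by exists p.
have [q01|] := classic (conn pt01 q); last by exists q.
by case: pq; apply: rt_trans (conn_sym p01) q01.
Qed.

End ProjectiveLine.

Section Chains.
Variables (R : pzRingType) (K : R -> Prop).
Hypothesis hK : subfield K.

(* Every point of the standard K-chain is connected to R(0,1): R(0,l) with
   l <> 0 is R(0,1), and R(k,l) with k <> 0 is distant from R(0,1). *)
Lemma std_chain_conn q : std_chain K q -> conn q (pt01 R).
Proof.
have [_ [_ [_ Kinv]]] := hK.
move=> [v [Kk [Kl [vn0 hq]]]].
have [k0|kn0] := eqVneq (v 0 0) 0.
  have ln0 : v 0 1 <> 0 by move=> l0; apply: vn0; apply: rv2_eq; rewrite ?k0 ?l0 mxE.
  have [l' [_ [ll' l'l]]] := Kinv _ Kl ln0.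
  suff -> : q = pt01 R by apply: rt_refl.
  apply: pt_ext; rewrite hq; apply: set_ext => w; split => -[r ->].
    by exists (r * v 0 1); apply: rv2_eq; mx2_simp; rewrite ?k0 ?mulr0.
  by exists (r * l'); apply: rv2_eq; mx2_simp; rewrite ?k0 ?mulr0 // -mulrA l'l mulr1.
have [k' [_ [kk' k'k]]] := Kinv _ Kk (elimN eqP kn0).
apply: rt_step; exists v, (rv 0 1); do 2 split => //.
exists (col_mx (rv k' (- (k' * v 0 1))) (rv 0 1)).
by split; apply: mx2_eq; mx2_simp; rewrite ?mulrN ?mulrA ?kk' ?k'k ?mul1r ?addNr ?subrr.
Qed.

Lemma chain_ext (C D : point R -> Prop) :
  is_chain K C -> (forall p, C p <-> D p) -> is_chain K D.
Proof. by move=> [G [hG hC]] CD; exists G; split => // p; rewrite -CD. Qed.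

Lemma chain_act G (HG : GL2 G) C : is_chain K C -> is_chain K (img_pt (act HG) C).
Proof.
move=> [A [hA hC]]; exists (A *m G); split; first exact: GL2_mul.
move=> p; split.
  by move=> [q' [/hC [q [sq eq']] ->]]; exists q; rewrite /= eq' imgS_comp.
move=> [q [sq ep]]; exists (act hA q); split; first by apply/hC; exists q.
by apply: pt_ext; rewrite ep /= imgS_comp.
Qed.

Lemma chain_conn C : is_chain K C -> exists c, forall x, C x -> conn x c.
Proof.
move=> [A [hA hC]]; exists (act hA (pt01 R)) => x /hC [q [sq ex]].
have -> : x = act hA q by apply: pt_ext.
by apply: conn_act; apply: std_chain_conn.
Qed.

Lemma involutive_chain_aut g : involutive g ->
  (forall C, is_chain K C -> is_chain K (img_pt g C)) -> chain_aut K g.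
Proof.
move=> gK g_chain; split; first exact: inv_bij.
split=> // D hD; exists (img_pt g D); split; first exact: g_chain.
move=> x; split=> [Dx|[_ [[y [Dy ->]] ->]]]; last by rewrite gK.
by exists (g x); split; [exists x|rewrite gK].
Qed.

End Chains.

Section ComponentRestriction.
Variables (R : pzRingType) (K : R -> Prop) (p0 : point R) (h : point R -> point R).

Definition restrict_to_component (x : point R) : point R :=
  if excluded_middle_informative (conn p0 x) then h x else x.

Lemma restrict_in x : conn p0 x -> restrict_to_component x = h x.
Proof. by rewrite /restrict_to_component; case: excluded_middle_informative. Qed.

Lemma restrict_out x : ~ conn p0 x -> restrict_to_component x = x.
Proof. by rewrite /restrict_to_component; case: excluded_middle_informative. Qed.

Hypotheses (hK : subfield K) (h_inv : involutive h)
  (h_chain : forall C, is_chain K C -> is_chain K (img_pt h C))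
  (h_comp : forall x, conn p0 x -> conn p0 (h x)).

Lemma restrict_involutive : involutive restrict_to_component.
Proof.
move=> x; have [x0|x0] := classic (conn p0 x); last by rewrite !restrict_out.
by rewrite (restrict_in x0) restrict_in ?h_inv //; apply: h_comp.
Qed.

(* A chain inside the component is moved by h, a chain outside it is fixed. *)
Lemma restrict_chain C : is_chain K C -> is_chain K (img_pt restrict_to_component C).
Proof.
move=> hC; have [c Cc] := chain_conn hK hC.
have [c0|c0] := classic (conn p0 c).
  have in0 x : C x -> conn p0 x by move=> /Cc xc; apply: rt_trans c0 (conn_sym xc).
  apply: chain_ext (h_chain hC) _ => x.
  by split=> -[y [Cy ->]]; exists y; rewrite restrict_in //; apply: in0.
have out0 x : C x -> ~ conn p0 x by move=> /Cc xc x0; apply: c0; apply: rt_trans x0 xc.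
apply: chain_ext hC _ => x; split=> [Cx|[y [Cy ->]]]; last by rewrite restrict_out //; apply: out0.
by exists x; rewrite restrict_out //; apply: out0.
Qed.

Lemma restrict_chain_aut : chain_aut K restrict_to_component.
Proof. exact: involutive_chain_aut restrict_involutive restrict_chain. Qed.

End ComponentRestriction.

Section Semilinear.
Variable R : pzRingType.
Implicit Types (f : 'rV[R]_2 -> 'rV[R]_2) (v w : 'rV[R]_2).

Lemma induced_fixed_eigen f g (x : point R) v :
  induced_by f g -> g x = x -> proj1_sig x = cyc v -> cyc v (f v).
Proof.
move=> fg gx xv; have := fg x; rewrite gx xv => ->.
by exists v; split => //; exists 1; rewrite scale1r.
Qed.

(* A semilinear map having (0,1) and all (1,c) as eigenvectors is a left
   multiplication v |-> t v: comparing f(1,c) with f(1,0) + zeta(c) f(0,1)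
   shows that the eigenvalues agree and that t c = zeta(c) t. *)
Lemma semilinear_scalar f (zeta : {rmorphism R -> R}) :
  (forall u v, f (u + v) = f u + f v) ->
  (forall r v, f (r *: v) = zeta r *: f v) ->
  cyc (rv 0 1) (f (rv 0 1)) -> (forall c, cyc (rv 1 c) (f (rv 1 c))) ->
  exists t, forall v, f v = t *: v.
Proof.
move=> fD fZ [t ft] f1c; have [t0 ft0] := f1c 0.
have shear c : rv 1 c = rv 1 0 + c *: rv 0 1 by apply: rv2_eq; mx2_simp.
have commute c : t0 * c = zeta c * t.
  have [tc ftc] := f1c c; have := fD (rv 1 0) (c *: rv 0 1).
  rewrite -shear ftc fZ ft0 ft => E.
  have := congr1 (fun u : 'rV[R]_2 => u 0 0) E; have := congr1 (fun u : 'rV[R]_2 => u 0 1) E.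
  by rewrite /=; mx2_simp => <- ->.
have tt0 : t = t0 by have := commute 1; rewrite rmorph1 mulr1 mul1r.
exists t0 => v; have Ev : v = v 0 0 *: rv 1 0 + v 0 1 *: rv 0 1 by apply: rv2_eq; mx2_simp.
by rewrite {1}Ev fD !fZ ft0 ft tt0; apply: rv2_eq; mx2_simp; rewrite commute tt0.
Qed.

Lemma scalar_image_cyc f (t : R) v w :
  (forall u, f u = t *: u) -> imgS f (cyc v) w -> cyc v w.
Proof. by move=> ft [u [[r ->] ->]]; exists (t * r); rewrite ft scalerA. Qed.

End Semilinear.

Lemma swap_rows_involution (R : pzRingType) (M N : 'M[R]_2) :
  M *m N = 1%:M -> N *m M = 1%:M ->
  exists G, G *m G = 1%:M /\ row 0 M *m G = row 1 M.
Proof.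
move=> MN NM; exists (N *m swap2 R *m M); split.
  by rewrite !mulmxA -(mulmxA _ M N) MN mulmx1 -(mulmxA N) swap2K mulmx1 NM.
have e1 : row 0 M *m N = rv 1 0 by rewrite -row_mul MN; apply: rv2_eq; mx2_simp.
by rewrite !mulmxA e1; apply: rv2_eq; rewrite /swap2; mx2_simp.
Qed.

Theorem mainTheorem6 (R : pzRingType) (K : R -> Prop) :
  subfield K -> disconnected R ->
  exists g : point R -> point R,
    chain_aut K g /\ ~ (exists f, semilinear_bij f /\ induced_by f g).
Proof.
move=> hK /disconnected_far [p0 far].
have [M [[N [MN NM]] hp0]] : exists M, GL2 M /\ proj1_sig p0 = cyc (row 0 M).
  by case: (proj2_sig p0) => v [[M [hM <-]] ->]; exists M.
have [G [GG hG]] := swap_rows_involution MN NM.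
have HG := GL2_involution GG.
have hGp0 : proj1_sig (act HG p0) = cyc (row 1 M) by rewrite (act_val HG hp0) hG.
have near : conn p0 (act HG p0).
  apply: rt_step; exists (row 0 M), (row 1 M); do 2 split => //.
  have -> : col_mx (row 0 M) (row 1 M) = M by apply: mx2_eq; mx2_simp.
  by exists N.
pose g := restrict_to_component p0 (act HG).
have gfix x : conn x (pt01 R) -> g x = x.
  by move=> x01; apply: restrict_out => p0x; apply/far/conn_sym; apply: rt_trans p0x x01.
exists g; split.
  apply: restrict_chain_aut => //; first exact: act_invol.
    exact: chain_act.
  by move=> x /(conn_act HG); apply: rt_trans near.
move=> [f [[_ [fD [zeta [_ fZ]]]] fg]].
have [t ft] := semilinear_scalar fD fZ
  (induced_fixed_eigen fg (gfix _ (rt_refl _ _ _)) erefl)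
  (fun c => induced_fixed_eigen fg (gfix _ (conn_1c c)) erefl).
have [_ [n10 _]] := hK; apply: (rows_independent (ex_intro _ N (conj MN NM)) n10).
apply: (scalar_image_cyc ft); rewrite -hp0 -fg /g restrict_in ?hGp0; last exact: rt_refl.
by exists 1; rewrite scale1r.
Qed.
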